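(* Let $n\ge4$ and let $A$ be an $n\times n$ completely positive matrix whose graph is the $n$-cycle $1-2-\cdots-n-1$, and suppose $A=BB^T$ where $B$ is the $n\times n$ matrix whose $i$-th column, for $1\le i\le n-1$, has entry $s_i$ in row $i$, entry $t_i$ in row $i+1$ and zeros elsewhere, and whose $n$-th column has entry $t_n$ in row $1$, entry $s_n$ in row $n$ and zeros elsewhere, with all $s_i,t_i>0$. Then $A=BB^T$ is the unique CP factorization of $A$ if and only if $\prod_{i=1}^n s_i=\prod_{i=1}^n t_i$.
   Context: A symmetric $n\times n$ matrix $A$ is completely positive if $A=BB^T$ for some entrywise nonnegative $n\times k$ matrix $B$; such an equality is a CP factorization of $A$. Only CP factorizations in which the columns of $B$ are pairwise linearly independent are considered, and two CP factorizations $A=BB^T=CC^T$ are considered equal if $C=BP$ for a permutation matrix $P$. The graph of a symmetric $n\times n$ matrix $A$ has vertex set $\{1,\dots,n\}$, with $\{i,j\}$ ($i\ne j$) an edge iff $a_{ij}\ne 0$. *)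

From HB Require Import structures.
From mathcomp Require Import all_boot all_order all_algebra.
From mathcomp Require Import reals.
Set Implicit Arguments. Unset Strict Implicit. Unset Printing Implicit Defensive.
Import Order.TTheory GRing.Theory Num.Theory.
Local Open Scope ring_scope.

Definition nonneg_mx (R : realType) (m k : nat) (C : 'M[R]_(m, k)) : Prop :=
  forall i j, 0 <= C i j.

Definition pairwise_indep_cols (R : realType) (m k : nat) (C : 'M[R]_(m, k)) : Prop :=
  forall j1 j2 : 'I_k, j1 != j2 ->
    forall a b : R, a *: col j1 C + b *: col j2 C = 0 -> a = 0 /\ b = 0.

Definition completely_positive (R : realType) (n : nat) (A : 'M[R]_n) : Prop :=
  exists (k : nat) (C : 'M[R]_(n, k)), nonneg_mx C /\ A = C *m C^T.

(* A = C C^T is a CP factorization (in the restricted sense of the paper: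
   columns pairwise linearly independent) *)
Definition cp_factorization (R : realType) (n k : nat) (A : 'M[R]_n)
    (C : 'M[R]_(n, k)) : Prop :=
  [/\ nonneg_mx C, pairwise_indep_cols C & A = C *m C^T].

Definition same_up_to_col_perm (R : realType) (n k l : nat)
    (B : 'M[R]_(n, k)) (C : 'M[R]_(n, l)) : Prop :=
  exists f : 'I_l -> 'I_k, bijective f /\ forall i j, C i j = B i (f j).

Definition unique_cp_factorization (R : realType) (n k : nat) (A : 'M[R]_n)
    (B : 'M[R]_(n, k)) : Prop :=
  cp_factorization A B /\
  forall (l : nat) (C : 'M[R]_(n, l)), cp_factorization A C -> same_up_to_col_perm B C.

Definition graph_is_cycle (R : realType) (n : nat) (A : 'M[R]_n) : Prop :=
  forall i j : 'I_n, i != j ->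
    (A i j != 0 <-> (val j == (val i).+1 %% n)%N \/ (val i == (val j).+1 %% n)%N).

(* the n x n matrix B whose column j (0-based) has s_j in row j and t_j in
   row j+1 (mod n); for the last column this is t_n in row 1 and s_n in row n *)
Definition cycle_B (R : realType) (n : nat) (s t : 'I_n -> R) : 'M[R]_n :=
  \matrix_(i < n, j < n)
    (if i == j then s j else if (val i == (val j).+1 %% n)%N then t j else 0).

From HB Require Import structures.
From mathcomp Require Import all_boot all_order all_algebra.
From mathcomp Require Import reals.
From mathcomp Require Import ring lra zify.
Import Order.TTheory GRing.Theory Num.Theory.
Local Open Scope ring_scope.
Set Implicit Arguments. Unset Strict Implicit.

(* (<=) Let C be a CP factorization of A with pairwise independent columns.
   As C >= 0 and A_ik = 0 for non-adjacent i, k, every column of C is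
   supported on a vertex or an edge of the cycle.  Let a_i, b_i be the
   squared norms of rows i and i+1 restricted to the columns supported on the
   edge {i, i+1}.  Cauchy-Schwarz gives a_i b_i >= (s_i t_i)^2 and the
   diagonal of A gives a_(i+1) + b_i <= s_(i+1)^2 + t_i^2; when
   prod s = prod t the inequality [cyclic_squeeze] turns all of these into
   equalities.  Equality in Cauchy-Schwarz together with pairwise
   independence leaves exactly one column per edge, equal to the matching
   column of B ([unique_factorization]).

   (=>) If prod s <> prod t, [cycle_slack] yields weights L_i > 0 such that
   the columns (s_i sqrt L_i) e_i + (t_i / sqrt L_i) e_(i+1) reproduce the
   off-diagonal entries of A while strictly lowering every diagonal entry;
   the diagonal defects, added as n more columns, give a CP factorization
   with 2n columns, necessarily different from B ([nonunique]). *)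

Section CycleIndex.
Variable n : nat.

Lemma cnext_subproof (i : 'I_n) : ((if i.+1 == n then 0 else i.+1) < n)%N.
Proof. case: ifP => /eqP; have := ltn_ord i; lia. Qed.

Lemma cprev_subproof (i : 'I_n) : ((if val i == 0 then n.-1 else i.-1) < n)%N.
Proof. case: ifP => /eqP; have := ltn_ord i; lia. Qed.

Definition cnext (i : 'I_n) : 'I_n := Ordinal (cnext_subproof i).
Definition cprev (i : 'I_n) : 'I_n := Ordinal (cprev_subproof i).

Local Ltac ord_arith := rewrite /=; repeat (case: ifP => /eqP); lia.

Lemma cnextK : cancel cnext cprev.
Proof. by move=> i; apply: val_inj; have := ltn_ord i; ord_arith. Qed.

Lemma cprevK : cancel cprev cnext.
Proof. by move=> i; apply: val_inj; have := ltn_ord i; ord_arith. Qed.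

Lemma val_cnext (i : 'I_n) : val (cnext i) = (i.+1 %% n)%N.
Proof.
have := ltn_ord i; rewrite /=; case: ifP => /eqP h hi; first by rewrite h modnn.
by rewrite modn_small //; lia.
Qed.

Lemma cycle_adjE (i j : 'I_n) : (val j == (val i).+1 %% n)%N = (j == cnext i).
Proof. by rewrite -val_cnext. Qed.

Lemma cycle_closed_all (P : 'I_n -> Prop) :
  (forall i, P i -> P (cnext i)) -> forall i0, P i0 -> forall j, P j.
Proof.
move=> hP i0 h0 j.
have iterE k : P (iter k cnext i0) /\ val (iter k cnext i0) = ((i0 + k) %% n)%N.
  elim: k => [|k [IH1 IH2]]; first by rewrite /= addn0 modn_small.
  rewrite iterS; split; first exact: hP.
  by rewrite val_cnext IH2 -addn1 modnDml addn1 addnS.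
have [Pj valj] := iterE (j + (n - i0))%N.
suff -> : j = iter (j + (n - i0))%N cnext i0 by [].
apply: val_inj; rewrite /= valj; have := ltn_ord i0 => hi.
have -> : (i0 + (j + (n - i0)) = j + n)%N by lia.
by rewrite modnDr modn_small.
Qed.

Lemma prod_cnext (R : comPzSemiRingType) (F : 'I_n -> R) :
  \prod_i F (cnext i) = \prod_i F i.
Proof. by rewrite [RHS](reindex_inj (can_inj cnextK)). Qed.

Lemma prod_cprev (R : comPzSemiRingType) (F : 'I_n -> R) :
  \prod_i F (cprev i) = \prod_i F i.
Proof. by rewrite [RHS](reindex_inj (can_inj cprevK)). Qed.

Lemma rev_cprev (i : 'I_n) : rev_ord (cprev i) = cnext (rev_ord i).
Proof. by apply: val_inj; have := ltn_ord i; ord_arith. Qed.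

Hypothesis n_ge4 : (4 <= n)%N.

Lemma cnext_neq i : (cnext i == i) = false.
Proof. by apply/eqP => /(congr1 val); have := ltn_ord i; ord_arith. Qed.

Lemma cprev_neq i : (cprev i == i) = false.
Proof. by apply/eqP => /(congr1 val); have := ltn_ord i; ord_arith. Qed.

Lemma cnext2_neq i : (cnext (cnext i) == i) = false.
Proof. by apply/eqP => /(congr1 val); have := ltn_ord i; ord_arith. Qed.

Lemma cprev_cnext_neq i : (cprev i == cnext i) = false.
Proof. by apply/eqP => /(congr1 val); have := ltn_ord i; ord_arith. Qed.

Lemma cprev_cnext2_neq i : (cprev i == cnext (cnext i)) = false.
Proof. by apply/eqP => /(congr1 val); have := ltn_ord i; ord_arith. Qed.

End CycleIndex.

Section CycleGram.
Variables (R : realType) (n : nat).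
Hypothesis n_ge4 : (4 <= n)%N.

Lemma cycle_BE (s t : 'I_n -> R) r j :
  cycle_B s t r j = (r == j)%:R * s j + (r == cnext j)%:R * t j.
Proof.
rewrite /cycle_B mxE cycle_adjE.
case: eqP => [->|_]; first by rewrite (eq_sym j) cnext_neq // mul1r mul0r addr0.
by case: eqP => _; rewrite ?mul0r ?mul1r ?add0r.
Qed.

Lemma sum_delta (I : finType) (F : I -> R) i : \sum_j (j == i)%:R * F j = F i.
Proof.
rewrite (bigD1 i) //= eqxx mul1r big1 ?addr0 // => j /negPf ->; by rewrite mul0r.
Qed.

Lemma cycle_gramE (s t : 'I_n -> R) i k :
  (cycle_B s t *m (cycle_B s t)^T) i k =
  (k == i)%:R * (s i ^+ 2 + t (cprev i) ^+ 2) + (k == cnext i)%:R * (s i * t i)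
  + (k == cprev i)%:R * (s (cprev i) * t (cprev i)).
Proof.
rewrite mxE.
have rowE j : cycle_B s t i j = (j == i)%:R * s j + (j == cprev i)%:R * t j.
  rewrite cycle_BE (eq_sym i j).
  by have -> : (i == cnext j) = (j == cprev i) by
    apply/eqP/eqP => [->|->]; rewrite ?cnextK ?cprevK.
under eq_bigr => j _ do rewrite rowE [X in _ * X]mxE mulrDl -!mulrA.
by rewrite big_split /= !sum_delta !cycle_BE cprevK; ring.
Qed.

Lemma gram_diag (s t : 'I_n -> R) i :
  (cycle_B s t *m (cycle_B s t)^T) i i = s i ^+ 2 + t (cprev i) ^+ 2.
Proof.
by rewrite cycle_gramE eqxx (eq_sym i) cnext_neq // (eq_sym i) cprev_neq //
  !mul0r mul1r !addr0.
Qed.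

Lemma gram_next (s t : 'I_n -> R) i :
  (cycle_B s t *m (cycle_B s t)^T) i (cnext i) = s i * t i.
Proof.
by rewrite cycle_gramE cnext_neq // eqxx (eq_sym (cnext i)) cprev_cnext_neq //
  !mul0r mul1r add0r addr0.
Qed.

Lemma gram_far (s t : 'I_n -> R) i k :
  k != i -> k != cnext i -> k != cprev i ->
  (cycle_B s t *m (cycle_B s t)^T) i k = 0.
Proof.
by move=> /negPf ki /negPf kn /negPf kp; rewrite cycle_gramE ki kn kp !mul0r !addr0.
Qed.

Lemma gram_prev_next (s t : 'I_n -> R) i :
  (cycle_B s t *m (cycle_B s t)^T) (cprev i) (cnext i) = 0.
Proof.
apply: gram_far; rewrite ?cprevK.
- by rewrite eq_sym cprev_cnext_neq.
- by rewrite cnext_neq.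
- apply/eqP => e; move: (cprev_cnext2_neq n_ge4 i).
  by rewrite e cprevK eqxx.
Qed.

End CycleGram.

Section CyclicInequality.
Variables (R : realType) (n : nat).
Hypothesis n_gt0 : (0 < n)%N.

Lemma prod_lt (x y : 'I_n -> R) :
  (forall i, 0 <= x i < y i) -> \prod_i x i < \prod_i y i.
Proof.
move=> h; apply: ltr_prod => //.
by apply/hasP; exists (Ordinal n_gt0); rewrite ?mem_index_enum.
Qed.

Lemma cyclic_drift (p q u : 'I_n -> R) :
  (forall i, 0 < u i) -> (forall i, 0 <= p i) ->
  (forall i, p i * u (cnext i) < q i * u i) -> \prod_i p i < \prod_i q i.
Proof.
move=> u_gt0 p_ge0 hpq.
have U_gt0 : 0 < \prod_i u i by apply: prodr_gt0.
have := @prod_lt (fun i => p i * u (cnext i)) (fun i => q i * u i).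
rewrite !big_split /= prod_cnext (ltr_pM2r U_gt0); apply=> i.
by rewrite hpq andbT mulr_ge0 // ltW.
Qed.

Lemma cyclic_drift_rev (p q u : 'I_n -> R) :
  (forall i, 0 < u i) -> (forall i, 0 <= p i) ->
  (forall i, p i * u i < q i * u (cnext i)) -> \prod_i p i < \prod_i q i.
Proof.
move=> u_gt0 p_ge0 hpq.
have U_gt0 : 0 < \prod_i u i by apply: prodr_gt0.
have := @prod_lt (fun i => p i * u i) (fun i => q i * u (cnext i)).
rewrite !big_split /= prod_cnext (ltr_pM2r U_gt0); apply=> i.
by rewrite hpq andbT mulr_ge0 // ltW.
Qed.

(* The core inequality: if a_i b_i >= (s_i t_i)^2 and the diagonal budget
   a_(i+1) + b_i <= s_(i+1)^2 + t_i^2 holds all around the cycle, then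
   prod s = prod t forces a_i = s_i^2 and b_i = t_i^2.  The defects
   u_i = a_i - s_i^2 satisfy a_i u_(i+1) <= t_i^2 u_i, hence have a constant
   sign, and a constant nonzero sign contradicts prod s = prod t. *)
Lemma cyclic_squeeze (a b s t : 'I_n -> R) :
  (forall i, 0 < s i) -> (forall i, 0 < t i) ->
  (forall i, 0 <= a i) -> (forall i, 0 <= b i) ->
  (forall i, s i ^+ 2 * t i ^+ 2 <= a i * b i) ->
  (forall i, a (cnext i) + b i <= s (cnext i) ^+ 2 + t i ^+ 2) ->
  \prod_i s i = \prod_i t i ->
  forall i, a i = s i ^+ 2 /\ b i = t i ^+ 2.
Proof.
move=> s_gt0 t_gt0 a_ge0 b_ge0 hab hbudget hst.
pose u i := a i - s i ^+ 2.
have s2_gt0 i : 0 < s i ^+ 2 by rewrite exprn_gt0.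
have t2_gt0 i : 0 < t i ^+ 2 by rewrite exprn_gt0.
have a_gt0 i : 0 < a i.
  have := hab i; have := a_ge0 i; have := b_ge0 i.
  have : 0 < s i ^+ 2 * t i ^+ 2 by rewrite mulr_gt0.
  nra.
have u_step i : a i * u (cnext i) <= t i ^+ 2 * u i.
  have : a i * u (cnext i) <= a i * (t i ^+ 2 - b i).
    by rewrite ler_wpM2l // /u; have := hbudget i; lra.
  by have := hab i; rewrite /u; lra.
have nonpos_step i : u i <= 0 -> u (cnext i) <= 0.
  move=> hu; rewrite -(pmulr_rle0 _ (a_gt0 i)); apply: le_trans (u_step i) _.
  by rewrite pmulr_rle0.
have neg_step i : u i < 0 -> u (cnext i) < 0.
  move=> hu; rewrite -(pmulr_rlt0 _ (a_gt0 i)); apply: le_lt_trans (u_step i) _.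
  by rewrite pmulr_rlt0.
have hst2 : \prod_i s i ^+ 2 = \prod_i t i ^+ 2 by rewrite !prodrXl hst.
have u_le0 i : u i <= 0.
  rewrite leNgt; apply/negP => u_pos.
  have u_gt0 j : 0 < u j.
    rewrite ltNge; apply/negP => hj; move: u_pos; rewrite ltNge.
    by rewrite (cycle_closed_all nonpos_step hj).
  suff : \prod_i s i ^+ 2 < \prod_i t i ^+ 2 by rewrite hst2 ltxx.
  apply: (cyclic_drift u_gt0) => [j|j]; first exact: ltW.
  apply: lt_le_trans (u_step j); rewrite (ltr_pM2r (u_gt0 _)) -subr_gt0.
  exact: u_gt0.
have u_ge0 i : 0 <= u i.
  rewrite leNgt; apply/negP => u_neg.
  have u_lt0 j : u j < 0 by exact: (cycle_closed_all neg_step u_neg).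
  suff : \prod_i t i ^+ 2 < \prod_i s i ^+ 2 by rewrite hst2 ltxx.
  apply: (@cyclic_drift_rev _ _ (fun j => - u j)) => [j|j|j].
  - by rewrite oppr_gt0.
  - exact: ltW.
  have := u_step j; have := u_lt0 j; have := u_lt0 (cnext j).
  rewrite /u; nra.
have a_eq i : a i = s i ^+ 2 by have := u_le0 i; have := u_ge0 i; rewrite /u; lra.
move=> i; split=> //; apply/eqP; rewrite eq_le; apply/andP; split.
  by have := hbudget i; rewrite a_eq; lra.
by rewrite -(ler_pM2l (s2_gt0 i)) -{2}(a_eq i); exact: hab.
Qed.

End CyclicInequality.

Section RealFacts.
Variable R : realType.

Lemma sum_mul_sum (I : finType) (f g : I -> R) :
  (\sum_j f j) * (\sum_k g k) = \sum_j \sum_k f j * g k.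
Proof. by rewrite mulr_suml; apply: eq_bigr => j _; rewrite mulr_sumr. Qed.

Lemma lagrange_identity (I : finType) (u v : I -> R) :
  \sum_j \sum_k (u j * v k - u k * v j) ^+ 2 =
  2 * ((\sum_j u j ^+ 2) * (\sum_j v j ^+ 2) - (\sum_j u j * v j) ^+ 2).
Proof.
rewrite expr2 !sum_mul_sum.
have -> : \sum_j \sum_k (u j * v k - u k * v j) ^+ 2 =
  \sum_j \sum_k (u j ^+ 2 * v k ^+ 2) + \sum_j \sum_k (u k ^+ 2 * v j ^+ 2)
  - 2 * \sum_j \sum_k (u j * v j * (u k * v k)).
  transitivity (\sum_j \sum_k (u j ^+ 2 * v k ^+ 2 + u k ^+ 2 * v j ^+ 2
      - 2 * (u j * v j * (u k * v k)))).
    by apply: eq_bigr => j _; apply: eq_bigr => k _; ring.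
  rewrite mulr_sumr -big_split -sumrB; apply: eq_bigr => j _.
  by rewrite mulr_sumr -big_split -sumrB.
by rewrite [X in _ + X - _]exchange_big /=; ring.
Qed.

Lemma cauchy_schwarz (I : finType) (u v : I -> R) :
  (\sum_j u j * v j) ^+ 2 <= (\sum_j u j ^+ 2) * (\sum_j v j ^+ 2).
Proof.
have : 0 <= \sum_j \sum_k (u j * v k - u k * v j) ^+ 2.
  by apply: sumr_ge0 => j _; apply: sumr_ge0 => k _; apply: sqr_ge0.
rewrite lagrange_identity; lra.
Qed.

Lemma cauchy_schwarz_eq (I : finType) (u v : I -> R) :
  (\sum_j u j * v j) ^+ 2 = (\sum_j u j ^+ 2) * (\sum_j v j ^+ 2) ->
  forall j k, u j * v k = u k * v j.
Proof.
move=> e j k.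
have e0 : \sum_j \sum_k (u j * v k - u k * v j) ^+ 2 = 0.
  by rewrite lagrange_identity e subrr mulr0.
have := psumr_eq0P (fun j _ => sumr_ge0 _ (fun k _ => sqr_ge0 _)) e0 (i := j) isT.
move/(psumr_eq0P (fun k _ => sqr_ge0 _))/(_ k isT)/eqP.
by rewrite sqrf_eq0 subr_eq0 => /eqP.
Qed.

Lemma sum_sqr_single (I : finType) (F : I -> R) j0 :
  (forall j, j != j0 -> F j = 0) -> \sum_j F j ^+ 2 = F j0 ^+ 2.
Proof.
by move=> h; rewrite (bigD1 j0) //= big1 ?addr0 // => j /h ->; rewrite expr0n.
Qed.

Lemma indep_of_private_row m k (C : 'M[R]_(m, k)) j1 j2 :
  (exists r, C r j1 != 0 /\ C r j2 = 0) -> (exists r, C r j2 != 0) ->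
  forall a b : R, a *: col j1 C + b *: col j2 C = 0 -> a = 0 /\ b = 0.
Proof.
move=> [r [Cr1 Cr2]] [r' Cr'2] a b e.
have rowE q : a * C q j1 + b * C q j2 = 0.
  by have := congr1 (fun M : 'M_(m, 1) => M q 0) e; rewrite !mxE.
have a0 : a = 0.
  by move/eqP: (rowE r); rewrite Cr2 mulr0 addr0 mulf_eq0 (negPf Cr1) orbF => /eqP.
split=> //; move/eqP: (rowE r'); rewrite a0 mul0r add0r mulf_eq0 (negPf Cr'2) orbF.
by move/eqP.
Qed.

Lemma pairwise_indep_of_private_rows m k (C : 'M[R]_(m, k)) :
  (forall j1 j2, j1 != j2 -> (exists r, C r j1 != 0 /\ C r j2 = 0) \/
                             (exists r, C r j2 != 0 /\ C r j1 = 0)) ->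
  (forall j, exists r, C r j != 0) -> pairwise_indep_cols C.
Proof.
move=> hpriv hnz j1 j2 ne a b e.
case: (hpriv _ _ ne) => h; first exact: indep_of_private_row h (hnz j2) _ _ e.
have [] := indep_of_private_row h (hnz j1) (a := b) (b := a); first by rewrite addrC.
by move=> -> ->.
Qed.

End RealFacts.

Section Uniqueness.
Variables (R : realType) (n l : nat).
Hypothesis n_ge4 : (4 <= n)%N.
Variables (s t : 'I_n -> R) (C : 'M[R]_(n, l)).
Hypotheses (s_gt0 : forall i, 0 < s i) (t_gt0 : forall i, 0 < t i).
Hypotheses (C_ge0 : nonneg_mx C) (C_indep : pairwise_indep_cols C).
Hypothesis C_gram : C *m C^T = cycle_B s t *m (cycle_B s t)^T.
Hypothesis prod_st : \prod_i s i = \prod_i t i.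

Local Notation A := (cycle_B s t *m (cycle_B s t)^T).

Lemma gramE i k : A i k = \sum_j C i j * C k j.
Proof. by rewrite -C_gram mxE; apply: eq_bigr => j _; rewrite mxE. Qed.

(* As C is nonnegative, a zero entry of A kills every product of columns. *)
Lemma gram_eq0_col i k : A i k = 0 -> forall j, C i j * C k j = 0.
Proof.
by rewrite gramE => h j; apply: (psumr_eq0P _ h) => // q _; apply: mulr_ge0.
Qed.

Lemma col_support_adj i k j :
  C i j != 0 -> C k j != 0 -> k != i -> k = cnext i \/ k = cprev i.
Proof.
move=> Cij Ckj ki.
case: (eqVneq k (cnext i)) => [->|kn]; first by left.
case: (eqVneq k (cprev i)) => [->|kp]; first by right.
move/eqP: (gram_eq0_col (gram_far n_ge4 s t ki kn kp) j).
by rewrite mulf_eq0 (negPf Cij) (negPf Ckj).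
Qed.

Lemma edge_col_support i j : C i j != 0 -> C (cnext i) j != 0 ->
  forall r, r != i -> r != cnext i -> C r j = 0.
Proof.
move=> Cij Cnj r ri rn; apply/eqP/negPn/negP => Crj.
have [e|e] := col_support_adj Cij Crj ri; first by rewrite e eqxx in rn.
have [e'|e'] := col_support_adj Cnj Crj rn.
  by move: (cprev_cnext2_neq n_ge4 i); rewrite -e e' eqxx.
by move: ri; rewrite e' cnextK eqxx.
Qed.

Lemma col_prev_next i j : C (cprev i) j * C (cnext i) j = 0.
Proof. exact: gram_eq0_col (gram_prev_next n_ge4 s t i) j. Qed.

(* The entries of rows i and i+1 in the columns supported on the edge
   {i, i+1}, their squared norms, and the squares of the entries of row i in
   the columns supported on {i} alone. *)
Definition edge_x i j := (C (cnext i) j != 0)%:R * C i j.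
Definition edge_y i j := (C i j != 0)%:R * C (cnext i) j.
Definition edge_a i := \sum_j edge_x i j ^+ 2.
Definition edge_b i := \sum_j edge_y i j ^+ 2.
Definition lone i j := ((C (cnext i) j == 0) && (C (cprev i) j == 0))%:R * C i j ^+ 2.

Lemma lone_ge0 i j : 0 <= lone i j.
Proof. by apply: mulr_ge0 => //; apply: sqr_ge0. Qed.

Lemma edge_dot i : \sum_j edge_x i j * edge_y i j = s i * t i.
Proof.
rewrite -(gram_next n_ge4 s t i) gramE; apply: eq_bigr => j _.
rewrite /edge_x /edge_y.
case: (eqVneq (C i j) 0) => [->|Cij]; first by rewrite !(mulr0, mul0r).
case: (eqVneq (C (cnext i) j) 0) => [->|Cnj]; first by rewrite !(mulr0, mul0r).
by rewrite !mul1r.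
Qed.

Lemma edge_cauchy_schwarz i : s i ^+ 2 * t i ^+ 2 <= edge_a i * edge_b i.
Proof. by rewrite -exprMn -edge_dot; apply: cauchy_schwarz. Qed.

Lemma row_norm_split i :
  s i ^+ 2 + t (cprev i) ^+ 2 = edge_a i + edge_b (cprev i) + \sum_j lone i j.
Proof.
rewrite -(gram_diag n_ge4 s t i) gramE /edge_a /edge_b -!big_split.
apply: eq_bigr => j _ /=; rewrite /edge_x /edge_y /lone cprevK.
have prev_next := col_prev_next i j.
case: (eqVneq (C (cnext i) j) 0) => [_|Cnj]; case: (eqVneq (C (cprev i) j) 0) => [_|Cpj] /=;
  try by rewrite ?mul0r ?mul1r; ring.
by move/eqP: prev_next; rewrite mulf_eq0 (negPf Cnj) (negPf Cpj).
Qed.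

(* Here prod s = prod t is used: all the inequalities are equalities. *)
Lemma edge_weights i : edge_a i = s i ^+ 2 /\ edge_b i = t i ^+ 2.
Proof.
have n_gt0 : (0 < n)%N by lia.
apply: (cyclic_squeeze n_gt0) => // [j|j|j|j].
- by apply: sumr_ge0 => q _; apply: sqr_ge0.
- by apply: sumr_ge0 => q _; apply: sqr_ge0.
- exact: edge_cauchy_schwarz.
have := row_norm_split (cnext j); rewrite cnextK => ->.
have : 0 <= \sum_q lone (cnext j) q by apply: sumr_ge0 => q _; apply: lone_ge0.
lra.
Qed.

Lemma col_not_lone i j : C i j != 0 -> C (cnext i) j != 0 \/ C (cprev i) j != 0.
Proof.
move=> Cij.
have lone0 : \sum_q lone i q = 0.
  have := row_norm_split i; have [-> _] := edge_weights i.
  by have [_ ->] := edge_weights (cprev i); lra.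
have := psumr_eq0P (fun q _ => lone_ge0 i q) lone0 (i := j) isT.
rewrite /lone; case: (eqVneq (C (cnext i) j) 0) => [_|]; last by left.
case: (eqVneq (C (cprev i) j) 0) => [_|]; last by right.
by move=> /= /eqP; rewrite mul1r sqrf_eq0 (negPf Cij).
Qed.

Definition edge_col i j := (C i j != 0) && (C (cnext i) j != 0).

Lemma edge_col_exists i : exists j, edge_col i j.
Proof.
case: (boolP [exists j, edge_col i j]) => [/existsP //|/existsPn none]; exfalso.
have : \sum_j edge_x i j * edge_y i j = 0.
  apply: big1 => j _; move: (none j); rewrite /edge_col negb_and !negbK.
  by rewrite /edge_x /edge_y; case/orP => /eqP ->; rewrite ?mulr0 ?mul0r.
rewrite edge_dot => /eqP.
by rewrite mulf_eq0 (gt_eqF (s_gt0 i)) (gt_eqF (t_gt0 i)).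
Qed.

(* Equality in Cauchy-Schwarz makes two edge columns proportional, which the
   pairwise independence of the columns of C forbids. *)
Lemma edge_col_unique i j k : edge_col i j -> edge_col i k -> j = k.
Proof.
move=> /andP [Cij Cnj] /andP [Cik Cnk]; apply/eqP/negPn/negP => jk.
have := @cauchy_schwarz_eq _ _ (edge_x i) (edge_y i).
rewrite edge_dot -/(edge_a i) -/(edge_b i); have [-> ->] := edge_weights i.
move/(_ (exprMn _ _ _) j k); rewrite /edge_x /edge_y Cij Cnj Cik Cnk !mul1r => prop.
have := C_indep jk (a := C (cnext i) k) (b := - C (cnext i) j).
case; last by move=> Cnk0; rewrite Cnk0 eqxx in Cnk.
apply/matrixP => r q; rewrite !mxE.
case: (eqVneq r i) => [->|ri]; first by rewrite mulrC prop; ring.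
case: (eqVneq r (cnext i)) => [->|rn]; first by ring.
by rewrite (edge_col_support Cij Cnj ri rn) (edge_col_support Cik Cnk ri rn); ring.
Qed.

Section EdgeColumns.
Variable k : 'I_n -> 'I_l.
Hypothesis k_edge : forall i, edge_col i (k i).

Lemma edge_col_inj : injective k.
Proof.
move=> i i' e; apply/eqP/negPn/negP => ne.
have /andP [Cik Cnk] := k_edge i; have /andP [Ci'k Cn'k] := k_edge i'.
rewrite -e in Ci'k Cn'k.
case: (eqVneq i' (cnext i)) => [ei|ni].
  move: Cn'k; rewrite ei (edge_col_support Cik Cnk _ _) ?eqxx //.
    by rewrite cnext2_neq.
  by rewrite cnext_neq.
by move: Ci'k; rewrite (edge_col_support Cik Cnk _ ni) ?eqxx // eq_sym.
Qed.

Lemma col_nonzero j : exists r, C r j != 0.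
Proof.
have n_gt0 : (0 < n)%N by lia.
pose i0 := Ordinal n_gt0.
case: (boolP [exists r, C r j != 0]) => [/existsP //|/existsPn C0]; exfalso.
have [j' jj'] : exists j', j != j'.
  case: (eqVneq j (k i0)) => [->|ne]; last by exists (k i0).
  exists (k (cnext i0)); apply/eqP => /edge_col_inj /eqP.
  by rewrite eq_sym cnext_neq.
have := C_indep jj' (a := 1) (b := 0).
case; last by move=> /eqP; rewrite oner_eq0.
apply/matrixP => r q; rewrite !mxE.
by move: (C0 r) => /negPn /eqP ->; rewrite mul0r mulr0 addr0.
Qed.

Lemma edge_col_surj j : exists i, k i = j.
Proof.
have [r Crj] := col_nonzero j.
case: (col_not_lone Crj) => h.
  by exists r; apply: edge_col_unique (k_edge r) _; rewrite /edge_col Crj h.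
exists (cprev r); apply: edge_col_unique (k_edge (cprev r)) _.
by rewrite /edge_col cprevK h Crj.
Qed.

Lemma edge_col_entries i r : C r (k i) = cycle_B s t r i.
Proof.
have /andP [Cik Cnk] := k_edge i.
have others j : j != k i -> edge_x i j = 0 /\ edge_y i j = 0.
  move=> jk; rewrite /edge_x /edge_y.
  case: (eqVneq (C i j) 0) => [->|Cij]; first by rewrite !mulr0 mul0r.
  case: (eqVneq (C (cnext i) j) 0) => [->|Cnj]; first by rewrite !mulr0 mul0r.
  by move: jk; rewrite (edge_col_unique (k_edge i) (k := j)) ?eqxx // /edge_col Cij Cnj.
have [ea eb] := edge_weights i.
have Csi : C i (k i) = s i.
  move: ea; rewrite /edge_a (sum_sqr_single (j0 := k i)); last by move=> j /others [].
  rewrite /edge_x Cnk mul1r => /eqP; rewrite eqrXn2 //; [by move/eqP | exact: ltW].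
have Cti : C (cnext i) (k i) = t i.
  move: eb; rewrite /edge_b (sum_sqr_single (j0 := k i)); last by move=> j /others [].
  rewrite /edge_y Cik mul1r => /eqP; rewrite eqrXn2 //; [by move/eqP | exact: ltW].
rewrite cycle_BE //.
case: (eqVneq r i) => [->|ri].
  by rewrite Csi (eq_sym i) cnext_neq // mul1r mul0r addr0.
case: (eqVneq r (cnext i)) => [->|rn]; first by rewrite Cti mul1r mul0r add0r.
by rewrite (edge_col_support Cik Cnk ri rn) !mul0r addr0.
Qed.

End EdgeColumns.

Lemma unique_factorization : same_up_to_col_perm (cycle_B s t) C.
Proof.
have /fin_all_exists [k k_edge] := edge_col_exists.
have /fin_all_exists [f kf] := edge_col_surj k_edge.
exists f; split.
  by exists k => [j|i]; [exact: kf | apply: (edge_col_inj k_edge); rewrite kf].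
by move=> r j; rewrite -[in LHS](kf j) edge_col_entries.
Qed.

End Uniqueness.

Definition other_cp_factorization (R : realType) (n : nat) (A B : 'M[R]_n) : Prop :=
  exists l (C : 'M[R]_(n, l)), cp_factorization A C /\ ~ same_up_to_col_perm B C.

Section CycleFactorizations.
Variables (R : realType) (n : nat).
Hypothesis n_ge4 : (4 <= n)%N.

Lemma cycle_B_nonneg (x y : 'I_n -> R) :
  (forall i, 0 < x i) -> (forall i, 0 < y i) -> nonneg_mx (cycle_B x y).
Proof.
move=> x_gt0 y_gt0 r j; rewrite cycle_BE //.
by apply: addr_ge0; apply: mulr_ge0 => //; exact: ltW.
Qed.

Lemma cycle_B_diag_neq0 (x y : 'I_n -> R) :
  (forall i, 0 < x i) -> forall a, cycle_B x y a a != 0.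
Proof.
move=> x_gt0 a.
by rewrite cycle_BE // eqxx (eq_sym a) cnext_neq // mul1r mul0r addr0 gt_eqF.
Qed.

Lemma cycle_B_next_neq0 (x y : 'I_n -> R) :
  (forall i, 0 < y i) -> forall a, cycle_B x y (cnext a) a != 0.
Proof.
move=> y_gt0 a.
by rewrite cycle_BE // cnext_neq // eqxx mul0r mul1r add0r gt_eqF.
Qed.

Lemma cycle_B_private_row (x y : 'I_n -> R) :
  (forall i, 0 < x i) -> (forall i, 0 < y i) ->
  forall a b, a != b -> exists r, cycle_B x y r a != 0 /\ cycle_B x y r b = 0.
Proof.
move=> x_gt0 y_gt0 a b ne.
case: (eqVneq a (cnext b)) => e.
  exists (cnext a); rewrite cycle_B_next_neq0 // cycle_BE //.
  have -> : (cnext a == b) = false by rewrite e cnext2_neq.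
  have -> : (cnext a == cnext b) = false.
    by apply/eqP => /(can_inj (@cnextK n)) /eqP; rewrite (negPf ne).
  by rewrite !mul0r addr0.
exists a; rewrite cycle_B_diag_neq0 // cycle_BE // (negPf ne) (negPf e).
by rewrite !mul0r addr0.
Qed.

Lemma cycle_B_cp (x y : 'I_n -> R) : (forall i, 0 < x i) -> (forall i, 0 < y i) ->
  cp_factorization (cycle_B x y *m (cycle_B x y)^T) (cycle_B x y).
Proof.
move=> x_gt0 y_gt0; split => //; first exact: cycle_B_nonneg.
apply: pairwise_indep_of_private_rows => [j1 j2 ne|j].
  by left; apply: cycle_B_private_row.
by exists j; apply: cycle_B_diag_neq0.
Qed.

Lemma diag_mxE (w : 'I_n -> R) i j : diag_mx (\row_k w k) i j = (i == j)%:R * w j.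
Proof. by rewrite !mxE; case: eqVneq => [->|_]; rewrite ?mul1r ?mul0r. Qed.

Lemma diag_gramE (w : 'I_n -> R) i k :
  (diag_mx (\row_j w j) *m (diag_mx (\row_j w j))^T) i k = (k == i)%:R * w i ^+ 2.
Proof.
rewrite tr_diag_mx mul_diag_mx mxE diag_mxE mxE eq_sym.
by case: eqVneq => [->|_]; rewrite ?mul1r ?mul0r ?mulr0 // expr2.
Qed.

Lemma perturbed_indep (x y w : 'I_n -> R) :
  (forall i, 0 < x i) -> (forall i, 0 < y i) -> (forall i, 0 < w i) ->
  pairwise_indep_cols (row_mx (cycle_B x y) (diag_mx (\row_i w i))).
Proof.
move=> x_gt0 y_gt0 w_gt0.
apply: pairwise_indep_of_private_rows => [j1 j2|j]; last first.
  rewrite -[j]splitK; case: (split j) => a /=; exists a.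
    by rewrite row_mxEl cycle_B_diag_neq0.
  by rewrite row_mxEr diag_mxE eqxx mul1r gt_eqF.
rewrite -[j1]splitK -[j2]splitK.
case: (split j1) => a; case: (split j2) => b /= ne.
- have ab : a != b by apply: contraNneq ne => ->.
  have [r [h1 h2]] := cycle_B_private_row x_gt0 y_gt0 ab.
  by left; exists r; rewrite !row_mxEl.
- left; exists (if a == b then cnext a else a); rewrite row_mxEl row_mxEr diag_mxE.
  case: (eqVneq a b) => [<-|ab]; last by rewrite (negPf ab) mul0r cycle_B_diag_neq0.
  by rewrite cnext_neq // mul0r cycle_B_next_neq0.
- right; exists (if b == a then cnext b else b); rewrite row_mxEl row_mxEr diag_mxE.
  case: (eqVneq b a) => [<-|ba]; last by rewrite (negPf ba) mul0r cycle_B_diag_neq0.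
  by rewrite cnext_neq // mul0r cycle_B_next_neq0.
- have ab : a != b by apply: contraNneq ne => ->.
  by left; exists a; rewrite !row_mxEr !diag_mxE eqxx (negPf ab) mul0r mul1r gt_eqF.
Qed.

(* If x_i y_i = s_i t_i and x_i^2 + y_(i-1)^2 stays below the diagonal
   s_i^2 + t_(i-1)^2, the cycle factor B(x, y) completed by the diagonal
   defects gives a CP factorization of B B^T with 2n columns. *)
Lemma perturbed_factorization (s t x y : 'I_n -> R) :
  (forall i, 0 < x i) -> (forall i, 0 < y i) ->
  (forall i, x i * y i = s i * t i) ->
  (forall i, x i ^+ 2 + y (cprev i) ^+ 2 < s i ^+ 2 + t (cprev i) ^+ 2) ->
  other_cp_factorization (cycle_B s t *m (cycle_B s t)^T) (cycle_B s t).
Proof.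
move=> x_gt0 y_gt0 hxy hgap.
pose w i := Num.sqrt (s i ^+ 2 + t (cprev i) ^+ 2 - x i ^+ 2 - y (cprev i) ^+ 2).
have w_gt0 i : 0 < w i by rewrite sqrtr_gt0; have := hgap i; lra.
have w2 i : w i ^+ 2 = s i ^+ 2 + t (cprev i) ^+ 2 - x i ^+ 2 - y (cprev i) ^+ 2.
  by rewrite sqr_sqrtr //; have := hgap i; lra.
exists (n + n)%N, (row_mx (cycle_B x y) (diag_mx (\row_i w i))); split; last first.
  by move=> [f [/bij_eq_card]]; rewrite !card_ord; lia.
split.
- move=> r j; rewrite -[j]splitK; case: (split j) => a /=.
    by rewrite row_mxEl; apply: cycle_B_nonneg.
  by rewrite row_mxEr diag_mxE; apply: mulr_ge0 => //; exact: ltW.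
- exact: perturbed_indep.
rewrite tr_row_mx mul_row_col; apply/matrixP => i k.
rewrite [RHS]mxE diag_gramE !(cycle_gramE n_ge4) w2 !hxy.
ring.
Qed.

End CycleFactorizations.

Section CycleSlack.
Variables (R : realType) (n : nat).
Hypothesis n_gt0 : (0 < n)%N.
Variable r : 'I_n -> R.
Hypothesis r_gt0 : forall i, 0 < r i.

(* Q_i = r_1 ... r_i, the partial products along the cycle (Q_0 = 1). *)
Definition partial_prod (i : 'I_n) := \prod_(j < n | (0 < j <= i)%N) r j.

Lemma partial_prod_gt0 i : 0 < partial_prod i.
Proof. by apply: prodr_gt0 => j _. Qed.

Lemma partial_prod0 (i : 'I_n) : nat_of_ord i = 0%N -> partial_prod i = 1.
Proof.
by move=> h; rewrite /partial_prod big_pred0 // => j; apply: negbTE; apply/negP; lia.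
Qed.

Lemma partial_prodS (i : 'I_n) :
  (0 < i)%N -> partial_prod i = r i * partial_prod (cprev i).
Proof.
move=> h; rewrite /partial_prod (bigD1 i) /=; last by apply/andP; split.
congr (_ * _); apply: eq_bigl => j; rewrite -val_eqE /= ifF.
  by apply/idP/idP; lia.
by apply/eqP; lia.
Qed.

Lemma prod_partial (i : 'I_n) :
  nat_of_ord i = 0%N -> \prod_j r j = r i * partial_prod (cprev i).
Proof.
move=> h; rewrite (bigD1 i) //=; congr (_ * _); apply: eq_bigl => j.
by rewrite /= -val_eqE /= h /=; move: (ltn_ord j) => hj; apply/idP/idP; lia.
Qed.

(* With the step d = (prod r - 1) / n, the sequence c_i = (1 + i d) / Q_i
   satisfies r_i c_i = c_(i-1) + d / Q_(i-1) all around the cycle, the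
   wrap-around from n-1 to 0 included. *)
Definition slack_step := (\prod_i r i - 1) / n%:R.
Definition slack_seq (i : 'I_n) := (1 + (nat_of_ord i)%:R * slack_step) / partial_prod i.

Lemma slack_seq_rec i :
  r i * slack_seq i = slack_seq (cprev i) + slack_step / partial_prod (cprev i).
Proof.
have Q_gt0 := partial_prod_gt0 (cprev i).
case: (posnP (nat_of_ord i)) => hi.
  rewrite /slack_seq partial_prod0 // hi mul0r addr0 divr1 mulr1.
  have -> : nat_of_ord (cprev i) = n.-1 by rewrite /= hi.
  apply: (@mulIf _ (partial_prod (cprev i))); first by rewrite gt_eqF.
  rewrite mulrDl !divfK ?gt_eqF // -prod_partial //.
  have n_eq : n%:R = n.-1%:R + 1 :> R by rewrite natr1 prednK.
  have : slack_step * n%:R = \prod_i r i - 1.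
    by rewrite /slack_step divfK // n_eq; apply: lt0r_neq0; rewrite ltr_wpDl.
  rewrite n_eq; lra.
rewrite /slack_seq partial_prodS //.
have -> : nat_of_ord i = (nat_of_ord (cprev i)).+1 by rewrite /= ifF; [lia | apply/eqP; lia].
rewrite -natr1; have := r_gt0 i => ri_gt0.
by field; apply/andP; split; rewrite gt_eqF.
Qed.

(* If prod r > 1 there are positive weights with nu_(i-1) + 1 < r_i nu_i:
   take nu = K c for K large enough. *)
Lemma cycle_slack : 1 < \prod_i r i ->
  exists nu : 'I_n -> R, (forall i, 0 < nu i) /\
    forall i, nu (cprev i) + 1 < r i * nu i.
Proof.
move=> hP.
have d_gt0 : 0 < slack_step by apply: divr_gt0; rewrite ?subr_gt0 ?ltr0n.
pose S := \sum_j partial_prod j.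
have Q_le_S i : partial_prod i <= S.
  rewrite /S (bigD1 i) //= lerDl.
  by apply: sumr_ge0 => j _; exact: ltW (partial_prod_gt0 j).
have S_gt0 : 0 < S.
  by have := Q_le_S (Ordinal n_gt0); have := partial_prod_gt0 (Ordinal n_gt0); lra.
pose K := (1 + S) / slack_step.
have K_gt0 : 0 < K by apply: divr_gt0 => //; lra.
have c_gt0 i : 0 < slack_seq i.
  apply: divr_gt0 (partial_prod_gt0 i).
  have : 0 <= (nat_of_ord i)%:R * slack_step by apply: mulr_ge0 => //; exact: ltW.
  lra.
exists (fun i => K * slack_seq i); split => [i|i]; first exact: mulr_gt0.
rewrite [r i * _]mulrCA slack_seq_rec mulrDr.
suff : 1 < K * (slack_step / partial_prod (cprev i)) by lra.
rewrite mulrA /K divfK ?gt_eqF // ltr_pdivlMr ?partial_prod_gt0 // mul1r.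
by have := Q_le_S (cprev i); lra.
Qed.

End CycleSlack.

(* The same with the cycle run backwards, by reversing the indices. *)
Lemma cycle_slack_rev (R : realType) (n : nat) (r : 'I_n -> R) :
  (0 < n)%N -> (forall i, 0 < r i) -> 1 < \prod_i r i ->
  exists nu : 'I_n -> R, (forall i, 0 < nu i) /\
    forall i, nu i + 1 < r i * nu (cprev i).
Proof.
move=> n_gt0 r_gt0 hP.
have hP' : 1 < \prod_j r (cnext (rev_ord j)).
  have rev_inj : injective (fun j : 'I_n => rev_ord (cprev j)).
    by move=> x y /rev_ord_inj /(can_inj (@cprevK n)).
  rewrite (reindex_inj rev_inj) /=.
  by under eq_bigr => j _ do rewrite rev_ordK cprevK.
have [nu [nu_gt0 hnu]] :=
  cycle_slack n_gt0 (r := fun j => r (cnext (rev_ord j))) (fun j => r_gt0 _) hP'.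
exists (fun i => nu (rev_ord i)); split => i; first exact: nu_gt0.
by have := hnu (rev_ord (cprev i)); rewrite rev_ordK cprevK rev_cprev cnextK.
Qed.

Section NonUniqueness.
Variables (R : realType) (n : nat).
Hypothesis n_ge4 : (4 <= n)%N.
Variables s t : 'I_n -> R.
Hypotheses (s_gt0 : forall i, 0 < s i) (t_gt0 : forall i, 0 < t i).

(* Scaling column i of B by sqrt L_i in row i and by 1 / sqrt L_i in row
   i+1 keeps the off-diagonal entries of B B^T; it suffices that all the
   diagonal entries decrease. *)
Lemma nonunique_of_weights (L : 'I_n -> R) : (forall i, 0 < L i) ->
  (forall i, s i ^+ 2 * L i + t (cprev i) ^+ 2 / L (cprev i) <
             s i ^+ 2 + t (cprev i) ^+ 2) ->
  other_cp_factorization (cycle_B s t *m (cycle_B s t)^T) (cycle_B s t).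
Proof.
move=> L_gt0 hL.
pose lam i := Num.sqrt (L i).
have lam_gt0 i : 0 < lam i by rewrite sqrtr_gt0.
have lam2 i : lam i ^+ 2 = L i by rewrite sqr_sqrtr // ltW.
apply: (@perturbed_factorization _ _ n_ge4 s t
  (fun i => s i * lam i) (fun i => t i / lam i)) => i /=.
- exact: mulr_gt0.
- exact: divr_gt0.
- by rewrite mulrACA mulfV ?mulr1 // gt_eqF.
- by rewrite exprMn expr_div_n !lam2.
Qed.

Lemma weight_ineq (S T a b : R) : 0 < S -> 0 < T -> 0 < a -> 0 < b ->
  S * (b + 1) < T * a -> S * (1 + a^-1) + T / (1 + b^-1) < S + T.
Proof.
move=> S_gt0 T_gt0 a_gt0 b_gt0 hab.
have -> : S * (1 + a^-1) + T / (1 + b^-1) =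
          S + T - (T * a - S * (b + 1)) / (a * (b + 1)).
  by field; apply/and3P; split; apply: lt0r_neq0; lra.
have : 0 < (T * a - S * (b + 1)) / (a * (b + 1)).
  by apply: divr_gt0; [rewrite subr_gt0 | apply: mulr_gt0 => //; lra].
lra.
Qed.

Lemma prod_sq_ratio_gt1 (p q : 'I_n -> R) :
  (forall i, 0 < p i) -> (forall i, 0 < q i) ->
  \prod_i p i < \prod_i q i -> 1 < \prod_i (q i ^+ 2 / p i ^+ 2).
Proof.
move=> p_gt0 q_gt0 lt_pq.
have P_gt0 : 0 < \prod_i p i by apply: prodr_gt0.
have Q_gt0 : 0 < \prod_i q i by apply: prodr_gt0.
by rewrite prodf_div !prodrXl ltr_pdivlMr ?exprn_gt0 // mul1r ltrXn2r // ltW.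
Qed.

(* If prod s <> prod t, weights L_i = 1 + 1/nu_i (prod s < prod t) or
   L_i = 1 / (1 + 1/nu_i) (prod s > prod t) built from [cycle_slack] make all
   the diagonal entries decrease. *)
Lemma nonunique : \prod_i s i != \prod_i t i ->
  other_cp_factorization (cycle_B s t *m (cycle_B s t)^T) (cycle_B s t).
Proof.
move=> prod_neq.
have n_gt0 : (0 < n)%N by lia.
have s2_gt0 i : 0 < s i ^+ 2 by rewrite exprn_gt0.
have t2_gt0 i : 0 < t (cprev i) ^+ 2 by rewrite exprn_gt0.
have prod_tp : \prod_i t (cprev i) = \prod_i t i by exact: prod_cprev.
case: (ltgtP (\prod_i s i) (\prod_i t i)) => [lt_st|gt_st|eq_st].
- have hr : 1 < \prod_i (t (cprev i) ^+ 2 / s i ^+ 2).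
    by apply: (prod_sq_ratio_gt1 s_gt0 (fun i => t_gt0 (cprev i))); rewrite prod_tp.
  have [nu [nu_gt0 hnu]] :=
    cycle_slack n_gt0 (fun i => divr_gt0 (t2_gt0 i) (s2_gt0 i)) hr.
  apply: (@nonunique_of_weights (fun i => 1 + (nu i)^-1)) => i /=.
    by apply: addr_gt0; rewrite ?invr_gt0.
  apply: (weight_ineq (s2_gt0 i) (t2_gt0 i) (nu_gt0 i) (nu_gt0 (cprev i))).
  move: (hnu i) => /=; rewrite -(ltr_pM2l (s2_gt0 i)) mulrA mulrCA.
  by rewrite (mulfV (lt0r_neq0 (s2_gt0 i))) mulr1.
- have hr : 1 < \prod_i (s i ^+ 2 / t (cprev i) ^+ 2).
    by apply: (prod_sq_ratio_gt1 (fun i => t_gt0 (cprev i)) s_gt0); rewrite prod_tp.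
  have [nu [nu_gt0 hnu]] :=
    cycle_slack_rev n_gt0 (fun i => divr_gt0 (s2_gt0 i) (t2_gt0 i)) hr.
  apply: (@nonunique_of_weights (fun i => (1 + (nu i)^-1)^-1)) => i /=.
    by rewrite invr_gt0; apply: addr_gt0; rewrite ?invr_gt0.
  rewrite invrK addrC [s i ^+ 2 + _]addrC.
  apply: (weight_ineq (t2_gt0 i) (s2_gt0 i) (nu_gt0 (cprev i)) (nu_gt0 i)).
  move: (hnu i) => /=; rewrite -(ltr_pM2l (t2_gt0 i)) mulrA mulrCA.
  by rewrite (mulfV (lt0r_neq0 (t2_gt0 i))) mulr1.
- by rewrite eq_st eqxx in prod_neq.
Qed.

End NonUniqueness.

Unset Implicit Arguments.

Theorem corollary4p4 (R : realType) (n : nat) (A : 'M[R]_n) (s t : 'I_n -> R) :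
  (4 <= n)%N ->
  completely_positive A ->
  graph_is_cycle A ->
  (forall i, 0 < s i) -> (forall i, 0 < t i) ->
  A = cycle_B s t *m (cycle_B s t)^T ->
  (unique_cp_factorization A (cycle_B s t) <-> \prod_(i < n) s i = \prod_(i < n) t i).
Proof.
move=> n_ge4 _ _ s_gt0 t_gt0 ->; split.
- move=> [_ unique]; apply/eqP/negPn/negP => prod_neq.
  have [l [C [C_cp C_other]]] := nonunique n_ge4 s_gt0 t_gt0 prod_neq.
  exact: C_other (unique _ _ C_cp).
- move=> prod_eq; split; first exact: cycle_B_cp.
  move=> l C [C_ge0 C_indep C_gram].
  exact: (unique_factorization n_ge4 s_gt0 t_gt0 C_ge0 C_indep (esym C_gram) prod_eq).
Qed.
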